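(* Let $0\le r\le m$ and let $\mathbf v_r\in\mathrm{GF}(q^m)^r$ have rank $r$. The rank weight enumerator of $\mathcal L_r=\langle\mathbf v_r\rangle^\perp\subseteq\mathrm{GF}(q^m)^r$ depends only on $r$ and equals $$W^{\mathrm R}_{\mathcal L_r}(x,y)=q^{-m}\left\{\big[x+(q^m-1)y\big]^{[r]}+(q^m-1)(x-y)^{[r]}\right\}.$$
   Context: The rank of a vector over $\mathrm{GF}(q^m)$ is the maximum number of its coordinates linearly independent over $\mathrm{GF}(q)$. $\langle\mathbf v\rangle=\{a\mathbf v:a\in\mathrm{GF}(q^m)\}$ and $\perp$ denotes the dual with respect to the standard inner product $\sum_iu_iv_i$. The rank weight enumerator of a code $\mathcal C\subseteq\mathrm{GF}(q^m)^N$ is $\sum_{\mathbf u\in\mathcal C}y^{\mathrm{rk}(\mathbf u)}x^{N-\mathrm{rk}(\mathbf u)}$. $q$-product: for homogeneous polynomials $a(x,y;m)=\sum_{i=0}^r a_i(m)y^ix^{r-i}$ and $b(x,y;m)=\sum_{j=0}^s b_j(m)y^jx^{s-j}$ with coefficients real functions of $m$ (out-of-range coefficients zero), $a*b=\sum_{u=0}^{r+s}c_u(m)y^ux^{r+s-u}$ with $c_u(m)=\sum_{i=0}^u q^{is}a_i(m)b_{u-i}(m-i)$; $q$-powers: $a^{[0]}=1$, $a^{[n]}=a^{[n-1]}*a$. The polynomial $x+(q^m-1)y$ has coefficients $1$ and $q^m-1$, and $x-y$ has coefficients $1,-1$. *)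

From HB Require Import structures.
From mathcomp Require Import all_boot all_order all_algebra all_field.
Set Implicit Arguments. Unset Strict Implicit. Unset Printing Implicit Defensive.
Import Order.TTheory GRing.Theory Num.Theory.
Local Open Scope ring_scope.

(* GF(q^m) is modelled as a field extension L of the finite field F = GF(q);
   finvect_type L is L equipped with its canonical finType structure. *)
Notation GF L := (finvect_type L).

Section Rank.
Variables (F : finFieldType) (L : fieldExtType F).

Definition rk (r : nat) (u : 'rV[GF L]_r) : nat :=
  \max_(S : {set 'I_r} | free [seq u 0 i | i in S]) #|S|.

Definition dual_line (r : nat) (v : 'rV[GF L]_r) : {set 'rV[GF L]_r} :=
  [set u : 'rV[GF L]_r | \sum_(i < r) u 0 i * v 0 i == 0].

(* coefficient of y^i x^(r-i) in the rank weight enumerator of C *)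
Definition rwe_coef (r : nat) (C : {set 'rV[GF L]_r}) (i : nat) : nat :=
  #|[set u in C | rk u == i]|.
End Rank.

(* Homogeneous polynomials sum_{i=0}^d a_i(m) y^i x^(d-i), with coefficients
   functions of m (m ranges over integers, values rational). *)
Record hpoly := HPoly { hdeg : nat; hcoef : nat -> int -> rat }.

Definition coef (a : hpoly) (i : nat) (m : int) : rat :=
  if (i <= hdeg a)%N then hcoef a i m else 0.

Definition qprod (q : nat) (a b : hpoly) : hpoly :=
  HPoly (hdeg a + hdeg b)
    (fun u m => \sum_(i < u.+1)
        (q%:Q) ^+ (i * hdeg b) * coef a i m * coef b (u - i) (m - (i%:Z))).

Definition hone : hpoly := HPoly 0 (fun _ _ => 1).

Fixpoint qpow (q : nat) (a : hpoly) (n : nat) : hpoly :=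
  match n with
  | 0 => hone
  | n.+1 => qprod q (qpow q a n) a
  end.

(* x + (q^m - 1) y *)
Definition hlin1 (q : nat) : hpoly :=
  HPoly 1 (fun i m => if i == 0%N then 1 else (q%:Q) ^ m - 1).

(* x - y *)
Definition hlin2 : hpoly := HPoly 1 (fun i _ => if i == 0%N then 1 else -1).

From HB Require Import structures.
From mathcomp Require Import all_boot all_order all_algebra all_field.
From mathcomp Require Import ring zify.
Set Implicit Arguments. Unset Strict Implicit. Unset Printing Implicit Defensive.
Import Order.TTheory GRing.Theory Num.Theory.
Local Open Scope ring_scope.

(* Write rk u for the F-dimension of the span of the entries of u.  If v has full
   rank r + 1 then v_0 <> 0, and u lies in <v>^perp exactly when u_0 is minus the
   inner product of its tail w with v' = (v_k / v_0)_k; hence rk u is rk w or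
   rk w + 1 according as <w, v'> lies in the span of w or not.  The number of w of
   rank j with <w, v'> in their span is found by double counting over x in F^r:
   <w, v' - x> = <w, v'> - sum_k x_k w_k, a linear map in x whose fibres over its
   image (the span of w) have q^(r - j) elements, while every v' - x has rank r.
   By induction on r the dual of every rank-r vector has the same enumerator, and
   the counts satisfy a recurrence in r; so do the coefficients of the claimed
   formula, the q-power [x + (q^m - 1) y]^[r] counting all vectors by rank. *)

Lemma coef_gt_hdeg a i m : (hdeg a < i)%N -> coef a i m = 0.
Proof. by move=> lt_a_i; rewrite /coef leqNgt lt_a_i. Qed.

Lemma coef_qpow0 q a i m : coef (qpow q a 0) i m = (i == 0)%:R.
Proof. by rewrite /coef /=; case: i. Qed.

Lemma coef_qprod_linear q p a u m : hdeg a = 1%N ->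
  coef (qprod q p a) u m =
    (q%:Q) ^+ u * coef p u m * coef a 0 (m - u%:Z)
    + (if u is j.+1 then (q%:Q) ^+ j * coef p j m * coef a 1 (m - j%:Z) else 0).
Proof.
move=> a1; rewrite {1}/coef /= a1.
case: leqP => [le_u_p1 | lt_p1_u].
  rewrite big_ord_recr /= muln1 subnn addrC; congr (_ + _).
  case: u le_u_p1 => [|u] le_u_p1; first by rewrite big_ord0.
  rewrite big_ord_recr /= muln1 subSnn big1 ?add0r // => i _.
  by rewrite (@coef_gt_hdeg a) ?mulr0 // a1; case: i => i /= lt_i_u; lia.
rewrite (@coef_gt_hdeg p u) ?mulr0 ?mul0r ?add0r; last by lia.
case: u lt_p1_u => [|u] lt_p1_u //.
by rewrite (@coef_gt_hdeg p u) ?mulr0 ?mul0r //; lia.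
Qed.

Lemma coef_qpow_hlin1S q r i (m : int) : (0 < q)%N ->
  coef (qpow q (hlin1 q) r.+1) i m =
    (q%:Q) ^+ i * coef (qpow q (hlin1 q) r) i m
    + (if i is j.+1 then
         ((q%:Q) ^ m - (q%:Q) ^+ j) * coef (qpow q (hlin1 q) r) j m
       else 0).
Proof.
move=> q_gt0 /=; rewrite coef_qprod_linear //; congr (_ + _).
  by rewrite /coef /= mulr1.
case: i => // j; rewrite /coef /= mulrAC; congr (_ * _).
have q_neq0 : (q%:Q) != 0 by rewrite pnatr_eq0 -lt0n.
by rewrite mulrBr mulr1 exprnP -expfzDr // subrKC.
Qed.

Lemma coef_qpow_hlin2S (q : nat) r i m :
  coef (qpow q hlin2 r.+1) i m =
    (q%:Q) ^+ i * coef (qpow q hlin2 r) i m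
    - (if i is j.+1 then (q%:Q) ^+ j * coef (qpow q hlin2 r) j m else 0).
Proof.
rewrite /= coef_qprod_linear //; congr (_ + _); first by rewrite /coef /= mulr1.
by case: i => [|j]; rewrite ?oppr0 // /coef /= mulrN1.
Qed.

Definition dual_line_coef (q r i : nat) (m : int) : rat :=
  ((q%:Q) ^ m)^-1 *
    (coef (qpow q (hlin1 q) r) i m + ((q%:Q) ^ m - 1) * coef (qpow q hlin2 r) i m).

Lemma dual_line_coef0 q i m : (0 < q)%N -> dual_line_coef q 0 i m = (i == 0)%:R.
Proof.
move=> q_gt0; have qm_neq0 : (q%:Q) ^ m != 0 by rewrite expfz_neq0 // pnatr_eq0 -lt0n.
by rewrite /dual_line_coef !coef_qpow0; field.
Qed.

Lemma dual_line_coefS q r i m : (0 < q)%N ->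
  dual_line_coef q r.+1 i m =
    (q%:Q) ^+ i * dual_line_coef q r i m
    + (if i is j.+1 then
         coef (qpow q (hlin1 q) r) j m - (q%:Q) ^+ j * dual_line_coef q r j m
       else 0).
Proof.
move=> q_gt0; have qm_neq0 : (q%:Q) ^ m != 0 by rewrite expfz_neq0 // pnatr_eq0 -lt0n.
rewrite /dual_line_coef coef_qpow_hlin1S // coef_qpow_hlin2S.
by case: i => [|j]; field.
Qed.

Lemma dim_add_line (K : fieldType) (vT : vectType K) (x : vT) (U : {vspace vT}) :
  \dim (<[x]> + U) = (\dim U + (x \notin U))%N.
Proof.
have [xU | xNU] /= := boolP (x \in U).
  by rewrite addn0; congr (\dim _); apply/addv_idPr; rewrite -memvE.
rewrite addnC dimv_disjoint_sum ?dim_vline; last first.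
  apply/eqP; rewrite -subv0; apply/subvP => y /memv_capP [/vlineP [k ->] kxU].
  have [-> | k_neq0] := eqVneq k 0; first by rewrite scale0r mem0v.
  by move: kxU; rewrite rpredZeq (negbTE k_neq0) (negbTE xNU).
by case: eqP xNU => // ->; rewrite mem0v.
Qed.

Lemma card_lfun_fibre (K : finFieldType) n (rT : vectType K)
    (f : 'Hom('rV[K]_n, rT)) (y : rT) :
  (#|[set x : 'rV[K]_n | f x == y]| * #|K| ^ \dim (limg f)
   = (y \in limg f) * #|K| ^ n)%N.
Proof.
have dim_ker_img : (\dim (lker f) + \dim (limg f) = n)%N.
  by rewrite -[lker f]capfv limg_ker_dim dimvf dim_matrix; lia.
have [/memv_imgP [x0 _ ->] | yNf] /= := boolP (y \in limg f); last first.
  rewrite mul0n; apply/eqP; rewrite muln_eq0 cards_eq0; apply/orP; left.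
  apply/eqP/setP => x; rewrite !inE; apply: contraNF yNf => /eqP <-.
  exact/memv_img/memvf.
have -> : [set x | f x == f x0] = [set x0 + z | z : 'rV[K]_n in lker f].
  apply/setP => x; rewrite inE; apply/eqP/imsetP => [fx | [z kz ->]].
    exists (x - x0); first by rewrite memv_ker linearB /= fx subrr.
    by rewrite addrC subrK.
  by rewrite linearD /=; move: kz; rewrite memv_ker => /eqP ->; rewrite addr0.
rewrite card_imset; last exact: addrI.
by rewrite mul1n card_vspace -expnD dim_ker_img.
Qed.

Section RowCons.
Variable A : Type.

Definition row_behead r (u : 'M[A]_(1, r.+1)) : 'M[A]_(1, r) :=
  \row_k u 0 (lift ord0 k).

Definition row_cons r (t : A) (u : 'M[A]_(1, r)) : 'M[A]_(1, r.+1) :=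
  \row_j (if unlift ord0 j is Some k then u 0 k else t).

Lemma row_cons0 r t (u : 'M[A]_(1, r)) : row_cons t u 0 ord0 = t.
Proof. by rewrite mxE unlift_none. Qed.

Lemma row_consK r t (u : 'M[A]_(1, r)) : row_behead (row_cons t u) = u.
Proof. by apply/rowP => k; rewrite !mxE liftK. Qed.

Lemma row_beheadK r (u : 'M[A]_(1, r.+1)) : row_cons (u 0 ord0) (row_behead u) = u.
Proof. by apply/rowP => j; rewrite !mxE; case: unliftP => [k ->|->]; rewrite ?mxE. Qed.

End RowCons.

Lemma card_rows_cons (A : finType) r (P : pred 'M[A]_(1, r.+1)) :
  #|[set u | P u]| = (\sum_(w : 'M[A]_(1, r)) #|[set t | P (row_cons t w)]|)%N.
Proof.
rewrite -sum1_card big_mkcond /=.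
rewrite (reindex (fun x : A * 'M[A]_(1, r) => row_cons x.1 x.2)) /=; last first.
  exists (fun u : 'M[A]_(1, r.+1) => (u 0 ord0, row_behead u)) => [[t w] _ | u _] /=.
    by rewrite row_cons0 row_consK.
  exact: row_beheadK.
rewrite -(pair_big xpredT xpredT (fun t w => if row_cons t w \in [set u | P u] then 1 else 0)%N) /=.
rewrite exchange_big; apply: eq_bigr => w _.
by rewrite -sum1_card [RHS]big_mkcond; apply: eq_bigr => t _; rewrite !inE.
Qed.

Lemma sum_card_exchange (A B : finType) (P : A -> B -> bool) :
  (\sum_a #|[set b | P a b]| = \sum_b #|[set a | P a b]|)%N.
Proof.
under eq_bigr => a _ do rewrite -sum1_card big_mkcond /=.
rewrite exchange_big; apply: eq_bigr => b _.
by rewrite -sum1_card [RHS]big_mkcond; apply: eq_bigr => a _; rewrite !inE.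
Qed.

Section RankWeights.
Variables (F : finFieldType) (L : fieldExtType F).
Local Notation T := (GF L).
Local Notation q := #|F|.
Local Notation M := (\dim {: T}).

Definition rowspan r (u : 'rV[T]_r) : {vspace T} := (\sum_(i < r) <[u 0%R i]>)%VS.

Lemma mem_rowspan r (u : 'rV[T]_r) i : u 0 i \in rowspan u.
Proof. by rewrite memvE; apply: (sumv_sup i) => //; rewrite -memvE memv_line. Qed.

Lemma rk_rowspan r (u : 'rV[T]_r) : rk u = \dim (rowspan u).
Proof.
pose spanS (S : {set 'I_r}) := (\sum_(i in S) <[u 0%R i]>)%VS.
pose isfree (S : {set 'I_r}) := free [seq u 0 i | i in S].
have freeE S : isfree S = (\dim (spanS S) == #|S|).
  by rewrite /isfree /free span_def big_map big_enum size_image.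
have [S0 free_S0 rkE] : {S0 | S0 \in isfree & rk u = #|S0|}.
  have free0 : isfree set0 by rewrite freeE /spanS big_set0 dimv0 cards0.
  by apply: eq_bigmax_cond; apply/card_gt0P; exists set0.
have /eqP dim_S0 : \dim (spanS S0) == #|S0| by rewrite -freeE.
rewrite rkE -dim_S0; apply/eqP; rewrite eqn_leq !dimvS //; last first.
  by apply/subv_sumP => i _; apply: (sumv_sup i).
(* A maximal free subfamily spans all entries: adding one outside its span keeps it free. *)
apply/subv_sumP => j _; rewrite -memvE; apply/negPn/negP => j_notin.
have jNS0 : j \notin S0.
  apply: contra j_notin => jS0; rewrite memvE.
  by apply: (sumv_sup j) => //; rewrite -memvE memv_line.
have free_jS0 : isfree (j |: S0).
  rewrite freeE /spanS (bigD1 j) ?setU11 //=.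
  rewrite (eq_bigl (mem S0)); last first.
    move=> i /=; rewrite in_setU1.
    by case: (eqVneq i j) => [->|_]; rewrite ?eqxx ?(negbTE jNS0) ?andbT.
  by rewrite dim_add_line j_notin dim_S0 cardsU1 jNS0 addnC.
have : (#|j |: S0| <= rk u)%N := leq_bigmax_cond _ free_jS0.
by rewrite rkE cardsU1 jNS0 ltnn.
Qed.

Lemma rowspan_cons r t (w : 'rV[T]_r) : rowspan (row_cons t w) = (<[t]> + rowspan w)%VS.
Proof.
rewrite /rowspan big_ord_recl row_cons0; congr (_ + _)%VS.
by apply: eq_bigr => i _; rewrite mxE liftK.
Qed.

Lemma rk_row_cons r t (w : 'rV[T]_r) : rk (row_cons t w) = (rk w + (t \notin rowspan w))%N.
Proof. by rewrite !rk_rowspan rowspan_cons dim_add_line. Qed.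

Lemma rk_row0 (u : 'rV[T]_0) : rk u = 0%N.
Proof. by rewrite rk_rowspan /rowspan big_ord0 dimv0. Qed.

Lemma rk_le r (u : 'rV[T]_r) : (rk u <= r)%N.
Proof.
elim: r u => [|r IH] u; first by rewrite rk_row0.
rewrite -[u]row_beheadK rk_row_cons.
by have := IH (row_behead u); case: (_ \notin _); rewrite ?addn0 ?addn1 // => /leqW.
Qed.

Lemma rk_le_dim r (u : 'rV[T]_r) : (rk u <= M)%N.
Proof. by rewrite rk_rowspan; apply/dimvS/subvf. Qed.

Lemma q_gt0 : (0 < q)%N.
Proof. by apply/card_gt0P; exists 0. Qed.

Lemma card_GF : #|T| = (q ^ M)%N.
Proof. by rewrite -(@card_vspacef F T (Vector.class T)); exact: card_vspace. Qed.

Lemma card_rk_row_cons r (w : 'rV[T]_r) i :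
  (#|[set t : T | rk (row_cons t w) == i]|%:R : rat) =
    (rk w == i)%:R * (q%:Q) ^+ i
    + (if i is j.+1 then (rk w == j)%:R * ((q%:Q) ^+ M - (q%:Q) ^+ j) else 0).
Proof.
have card_span : #|[set t : T | t \in rowspan w]| = (q ^ rk w)%N.
  by rewrite cardsE card_vspace rk_rowspan.
have [<- | rk_neq] := eqVneq (rk w) i.
  have -> : [set t | rk (row_cons t w) == rk w] = [set t | t \in rowspan w].
    by apply/setP => t; rewrite !inE rk_row_cons -{2}[rk w]addn0 eqn_add2l eqb0 negbK.
  rewrite card_span natrX mul1r; case: (rk w) => [|j]; first by rewrite addr0.
  by rewrite (gtn_eqF (ltnSn j)) mul0r addr0.
have rk_cons_neq t : (rk (row_cons t w) == i) = ((rk w).+1 == i) && (t \notin rowspan w).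
  by rewrite rk_row_cons; case: (_ \notin _); rewrite /= ?addn1 ?andbT // addn0 andbF (negbTE rk_neq).
rewrite mul0r add0r; case: i rk_neq rk_cons_neq => [|j] rk_neq rk_cons_neq.
  apply/eqP; rewrite pnatr_eq0 cards_eq0; apply/eqP/setP => t.
  by rewrite !inE rk_cons_neq.
have [rk_j | rk_neq_j] := eqVneq (rk w) j; last first.
  rewrite mul0r; apply/eqP; rewrite pnatr_eq0 cards_eq0; apply/eqP/setP => t.
  by rewrite !inE rk_cons_neq eqSS (negbTE rk_neq_j).
have -> : [set t | rk (row_cons t w) == j.+1] = ~: [set t | t \in rowspan w].
  by apply/setP => t; rewrite !inE rk_cons_neq rk_j eqxx.
rewrite mul1r -rk_j -!natrX -natrB; last by rewrite leq_pexp2l ?q_gt0 ?rk_le_dim.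
by rewrite cardsCs setCK card_span card_GF.
Qed.

Lemma rwe_coef_setTE r i :
  (rwe_coef [set: 'rV[T]_r] i)%:R = \sum_(w : 'rV[T]_r) ((rk w == i)%:R : rat).
Proof.
rewrite /rwe_coef -sum1_card natr_sum big_mkcond /=.
by apply: eq_bigr => w _; rewrite !inE; case: (_ == _).
Qed.

Lemma rwe_coef_setT r i :
  (rwe_coef [set: 'rV[T]_r] i)%:R = coef (qpow q (hlin1 q) r) i M%:Z.
Proof.
elim: r i => [|r IH] i.
  rewrite rwe_coef_setTE coef_qpow0 (big_pred1 0) => [|w]; first by rewrite rk_row0 eq_sym.
  by rewrite /= (thinmx0 w) eqxx.
have -> : rwe_coef [set: 'rV[T]_r.+1] i = #|[set u : 'rV[T]_r.+1 | rk u == i]|.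
  by apply: eq_card => u; rewrite !inE.
rewrite card_rows_cons natr_sum.
under eq_bigr => w _ do rewrite card_rk_row_cons.
rewrite big_split /= -mulr_suml -rwe_coef_setTE IH coef_qpow_hlin1S ?q_gt0 // mulrC.
case: i => [|j]; first by rewrite big1.
by rewrite -mulr_suml -rwe_coef_setTE IH -exprnP [X in _ + X = _]mulrC.
Qed.

Definition dot r (u z : 'rV[T]_r) : T := \sum_k u 0 k * z 0 k.

Definition normalized_tail r (v : 'rV[T]_r.+1) : 'rV[T]_r :=
  \row_k (v 0 (lift ord0 k) / v 0 ord0).

Lemma row_cons_dual_line r (v : 'rV[T]_r.+1) t w : v 0 ord0 != 0 ->
  (row_cons t w \in dual_line v) = (t == - dot w (normalized_tail v)).
Proof.
move=> v0_neq0; rewrite inE big_ord_recl row_cons0.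
have -> : dot w (normalized_tail v) =
    (\sum_(k < r) row_cons t w 0 (lift ord0 k) * v 0 (lift ord0 k)) / v 0 ord0.
  by rewrite mulr_suml; apply: eq_bigr => k _; rewrite !mxE liftK mulrA.
by rewrite addr_eq0 -mulNr -[RHS](can_eq (mulfK v0_neq0)) divfK.
Qed.

Lemma rwe_coef_dual_line_cons r (v : 'rV[T]_r.+1) i : v 0 ord0 != 0 ->
  rwe_coef (dual_line v) i =
    (\sum_(w : 'rV[T]_r)
       (rk w + (dot w (normalized_tail v) \notin rowspan w) == i))%N.
Proof.
move=> v0_neq0; rewrite /rwe_coef card_rows_cons; apply: eq_bigr => w _.
have -> : [set t | (row_cons t w \in dual_line v) && (rk (row_cons t w) == i)] =
    [set t | (t == - dot w (normalized_tail v)) &&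
             (rk w + (dot w (normalized_tail v) \notin rowspan w) == i)].
  apply/setP => t; rewrite in_set [in RHS]in_set row_cons_dual_line // rk_row_cons.
  by case: eqP => // ->; rewrite memvN.
case: (_ == i); last by apply/eqP; rewrite cards_eq0; apply/eqP/setP => t; rewrite !inE andbF.
rewrite (_ : [set t | _ & true] = [set - dot w (normalized_tail v)]) ?cards1 //.
by apply/setP => t; rewrite !inE andbT.
Qed.

Lemma rk_scale r (a : T) (u : 'rV[T]_r) : a != 0 -> rk (a *: u) = rk u.
Proof.
move=> a_neq0; rewrite !rk_rowspan.
have -> : rowspan (a *: u) = (amull a @: rowspan u)%VS.
  by rewrite /rowspan limg_sum; apply: eq_bigr => i _; rewrite limg_line lfunE mxE.
apply: limg_dim_eq; apply/eqP; rewrite -subv0; apply/subvP => y /memv_capP [_].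
by rewrite memv_ker lfunE /= mulf_eq0 (negbTE a_neq0) => /eqP ->; exact: mem0v.
Qed.

Lemma rk_full_head_neq0 r (v : 'rV[T]_r.+1) : rk v = r.+1 -> v 0 ord0 != 0.
Proof.
apply: contra_eqN => /eqP v0_eq0; rewrite -[v]row_beheadK rk_row_cons v0_eq0 mem0v.
by rewrite addn0 ltn_eqF // ltnS rk_le.
Qed.

Definition shifted_tail r (v : 'rV[T]_r.+1) (x : 'rV[F]_r) : 'rV[T]_r :=
  \row_k (normalized_tail v 0 k - (x 0 k)%:A).

Lemma rk_shifted_tail r (v : 'rV[T]_r.+1) x : rk v = r.+1 -> rk (shifted_tail v x) = r.
Proof.
move=> rk_v; have v0_neq0 := rk_full_head_neq0 rk_v.
set w := shifted_tail v x.
(* v / v_0 = (1, w + x) lies in the span of (1, w). *)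
have sub_span : (rowspan ((v 0%R ord0)^-1 *: v) <= rowspan (row_cons (1%R : T) w))%VS.
  apply/subv_sumP => i _; rewrite -memvE rowspan_cons mxE.
  case: (unliftP ord0 i) => [k -> | ->]; last first.
    by rewrite mulVf //; apply/(subvP (addvSl _ _))/memv_line.
  have -> : (v 0 ord0)^-1 * v 0 (lift ord0 k) = w 0 k + x 0 k *: 1.
    by rewrite !mxE subrK mulrC.
  by rewrite addrC memv_add ?memvZ ?memv_line ?mem_rowspan.
have := dimvS sub_span; rewrite -!rk_rowspan rk_scale ?invr_eq0 // rk_v rk_row_cons.
by have := rk_le w; case: (_ \notin _); lia.
Qed.

Definition lincomb r (u : 'rV[T]_r) (x : 'rV[F]_r) : T := \sum_k x 0 k *: u 0 k.

Fact lincomb_is_linear r (u : 'rV[T]_r) : linear (lincomb u).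
Proof.
move=> a x y; rewrite /lincomb scaler_sumr -big_split.
by apply: eq_bigr => k _; rewrite !mxE scalerDl scalerA.
Qed.

HB.instance Definition _ r (u : 'rV[T]_r) :=
  GRing.isLinear.Build F 'rV[F]_r T _ (lincomb u) (lincomb_is_linear u).

Lemma limg_lincomb r (u : 'rV[T]_r) : limg (linfun (lincomb u)) = rowspan u.
Proof.
apply/eqP; rewrite eqEsubv; apply/andP; split.
  apply/subvP => _ /memv_imgP [x _ ->]; rewrite lfunE.
  by apply: rpred_sum => k _; rewrite rpredZ ?mem_rowspan.
apply/subv_sumP => i _; rewrite -memvE.
have -> : u 0 i = linfun (lincomb u) (delta_mx 0 i).
  rewrite lfunE /= /lincomb (bigD1 i) //= big1 => [|k k_neq_i].
    by rewrite mxE !eqxx scale1r addr0.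
  by rewrite mxE (negbTE k_neq_i) andbF scale0r.
exact/memv_img/memvf.
Qed.

Lemma dot_shifted_tail r (v : 'rV[T]_r.+1) x w :
  dot w (shifted_tail v x) = dot w (normalized_tail v) - lincomb w x.
Proof.
rewrite /dot /lincomb -sumrB; apply: eq_bigr => k _.
by rewrite [shifted_tail v x 0 k]mxE mulrBr mulr_algr.
Qed.

Lemma sum_rwe_coef_shifted_tails r (v : 'rV[T]_r.+1) j :
  (q ^ j * \sum_(x : 'rV[F]_r) rwe_coef (dual_line (shifted_tail v x)) j =
   q ^ r * \sum_(w : 'rV[T]_r)
             ((rk w == j) && (dot w (normalized_tail v) \in rowspan w)))%N.
Proof.
have -> : (\sum_x rwe_coef (dual_line (shifted_tail v x)) j =
    \sum_x #|[set w | (rk w == j) && (dot w (shifted_tail v x) == 0%R)]|)%N.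
  by apply: eq_bigr => x _; apply: eq_card => w; rewrite !inE andbC.
rewrite sum_card_exchange !big_distrr; apply: eq_bigr => w _.
have [rk_w | _] := eqVneq (rk w) j; last first.
  rewrite /= muln0; apply/eqP; rewrite muln_eq0 cards_eq0; apply/orP; right.
  by apply/eqP/setP => x; rewrite !inE.
have -> : [set x | true && (dot w (shifted_tail v x) == 0)] =
    [set x | linfun (lincomb w) x == dot w (normalized_tail v)].
  by apply/setP => x; rewrite !inE dot_shifted_tail lfunE subr_eq0 eq_sym.
by rewrite /= mulnC -rk_w rk_rowspan -limg_lincomb card_lfun_fibre mulnC.
Qed.

Lemma sum_rk_mem_rowspan r (v : 'rV[T]_r.+1) j (c : rat) : rk v = r.+1 ->
    (forall z : 'rV[T]_r, rk z = r -> (rwe_coef (dual_line z) j)%:R = c) ->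
  \sum_(w : 'rV[T]_r) ((rk w == j) && (dot w (normalized_tail v) \in rowspan w))%:R
    = (q%:Q) ^+ j * c.
Proof.
move=> rk_v dual_count.
have := congr1 (fun n => n%:R : rat) (sum_rwe_coef_shifted_tails v j).
rewrite /= !natrM !natr_sum !natrX.
under eq_bigr => x _ do rewrite dual_count ?rk_shifted_tail //.
rewrite sumr_const card_mx mul1n -[c *+ _]mulr_natr natrX => eq_counts.
have qr_neq0 : (q%:Q) ^+ r != 0 by rewrite expf_neq0 // pnatr_eq0 -lt0n q_gt0.
by apply: (mulfI qr_neq0); rewrite -eq_counts; ring.
Qed.

Lemma rwe_coef_dual_line r (v : 'rV[T]_r) i :
  rk v = r -> (rwe_coef (dual_line v) i)%:R = dual_line_coef q r i M%:Z.
Proof.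
elim: r v i => [|r IH] v i rk_v.
  have -> : dual_line v = setT by apply/setP => u; rewrite !inE big_ord0 eqxx.
  by rewrite rwe_coef_setT coef_qpow0 dual_line_coef0 ?q_gt0.
have v0_neq0 := rk_full_head_neq0 rk_v.
have count_mem j : \sum_(w : 'rV[T]_r)
      ((rk w == j) && (dot w (normalized_tail v) \in rowspan w))%:R
    = (q%:Q) ^+ j * dual_line_coef q r j M%:Z.
  by apply: sum_rk_mem_rowspan => // z; apply: IH.
rewrite rwe_coef_dual_line_cons // natr_sum dual_line_coefS ?q_gt0 // -count_mem.
case: i => [|j].
  rewrite addr0; apply: eq_bigr => w _.
  by case: (_ \in _); rewrite ?addn0 ?addn1 ?andbT ?andbF.
rewrite -count_mem -rwe_coef_setT rwe_coef_setTE -sumrB -big_split /=.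
apply: eq_bigr => w _; case: (_ \in _); rewrite /= ?addn0 ?addn1 ?andbT ?andbF.
  by rewrite subrr addr0.
by rewrite add0r subr0 eqSS.
Qed.
End RankWeights.

Theorem proposition15 (F : finFieldType) (L : fieldExtType F) (m r : nat)
  (hm : \dim {: L} = m) (hr : (r <= m)%N) (v : 'rV[GF L]_r)
  (hv : rk v = r) :
  forall i : nat,
    ((rwe_coef (dual_line v) i)%:R : rat) =
      ((#|F|%:Q) ^ (m%:Z))^-1 *
        (coef (qpow #|F| (hlin1 #|F|) r) i m%:Z
         + ((#|F|%:Q) ^ (m%:Z) - 1) * coef (qpow #|F| hlin2 r) i m%:Z).
Proof.
by move=> i; rewrite rwe_coef_dual_line // -hm.
Qed.
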